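(* Let $f : \mathbb{R} \to \mathbb{R}$ with $f \in \mathrm{BT}(\mathbb{R})$, i.e. $xf(x) \ge 0$ and $x(x-f(x)) \ge 0$ for all $x \in \mathbb{R}$. Then $f$ solves $$f(f(-x)+x) = f(-f(x)) + f(x) \quad \text{for all } x \in \mathbb{R}$$ if and only if $$[\mathrm{id} - (f_-)^{-\mathrm{id}}, f_+] = 0 \quad \text{and} \quad [(f_-)^{-\mathrm{id}}, \mathrm{id} - f_+] = 0$$ hold on $[0,\infty)$; explicitly, for every $x \ge 0$, $$f(x) + f(-f(x)) = f(x + f(-x)) \quad\text{and}\quad -f(f(x)-x) = -f(-x) - f(-f(-x)).$$
   Context: $f_- := f|_{(-\infty,0]}$, $f_+ := f|_{[0,\infty)}$. For an injective $\alpha$, $g^\alpha := \alpha\circ g \circ \alpha^{-1}$; thus $(f_-)^{-\mathrm{id}}(x) = -f(-x)$ for $x \ge 0$. The commutator is $[g,h] := g\circ h - h \circ g$, and $\mathrm{id}$ is the identity map. *)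

From Stdlib Require Import Reals.
Open Scope R_scope.

Definition BT (f : R -> R) : Prop :=
  forall x : R, 0 <= x * f x /\ 0 <= x * (x - f x).

Definition idR : R -> R := fun x => x.

(* (f_-)^{-id}: conjugation of f restricted to (-oo,0] by -id,
   i.e. x |-> -f(-x), used on [0,oo). *)
Definition fminus_conj (f : R -> R) : R -> R := fun x => - f (- x).

(* f_+ : f restricted to [0,oo) (as a function, used only on [0,oo)). *)
Definition fplus (f : R -> R) : R -> R := fun x => f x.

Definition fsub (g h : R -> R) : R -> R := fun x => g x - h x.

Definition comm (g h : R -> R) : R -> R := fun x => g (h x) - h (g x).

(* Both commutator identities are the functional equation itself, evaluated at
   x and at -x respectively; as x ranges over [0,oo), x and -x cover all of R. *)
From Stdlib Require Import Reals Lra.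
Open Scope R_scope.

Definition solves_at (f : R -> R) (x : R) : Prop :=
  f (f (- x) + x) = f (- f x) + f x.

Lemma comm_id_sub_conj_fplus_eq0 (f : R -> R) (x : R) :
  comm (fsub idR (fminus_conj f)) (fplus f) x = 0 <-> solves_at f x.
Proof.
  unfold comm, fsub, idR, fminus_conj, fplus, solves_at.
  replace (x - - f (- x)) with (f (- x) + x) by ring.
  lra.
Qed.

Lemma comm_conj_id_sub_fplus_eq0 (f : R -> R) (x : R) :
  comm (fminus_conj f) (fsub idR (fplus f)) x = 0 <-> solves_at f (- x).
Proof.
  unfold comm, fsub, idR, fminus_conj, fplus, solves_at.
  rewrite Ropp_involutive.
  replace (- (x - f x)) with (f x + - x) by ring.
  lra.
Qed.

Lemma solves_everywhere_iff_nonneg (f : R -> R) :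
  (forall x : R, solves_at f x) <->
  (forall x : R, 0 <= x -> solves_at f x /\ solves_at f (- x)).
Proof.
  split.
  - intros E x _. split; apply E.
  - intros E x. destruct (Rle_or_lt 0 x) as [Hx | Hx].
    + apply (E x Hx).
    + rewrite <- (Ropp_involutive x). apply E. lra.
Qed.

Theorem mainTheorem4 (f : R -> R) (hf : BT f) :
  (forall x : R, f (f (- x) + x) = f (- f x) + f x) <->
  (forall x : R, 0 <= x ->
     comm (fsub idR (fminus_conj f)) (fplus f) x = 0 /\
     comm (fminus_conj f) (fsub idR (fplus f)) x = 0).
Proof.
  change (forall x : R, f (f (- x) + x) = f (- f x) + f x)
    with (forall x : R, solves_at f x).
  rewrite solves_everywhere_iff_nonneg.
  split; intros E x Hx; specialize (E x Hx);
    rewrite comm_id_sub_conj_fplus_eq0, comm_conj_id_sub_fplus_eq0 in *;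
    exact E.
Qed.
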